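(* Let $n>1$ and $m>1$ be integers and let $G$ be an $r$-regular bipartite graph of order $m$ (with $r\geq 1$). Then $\chi_{ld}(G[\overline{K_{n}}])=2$.
   Context: All graphs are finite, simple and undirected. For a graph $G=(V,E)$ of order $N$ without isolated vertices, a bijection $f\colon V\to\{1,2,\dots,N\}$ is a local distance antimagic labeling if $w(u)\neq w(v)$ for every edge $uv$, where $w(u)=\sum_{x\in N(u)}f(x)$ and $N(u)$ is the open neighborhood of $u$. $\chi_{ld}(G)$ is the minimum number of distinct weights over all local distance antimagic labelings of $G$. $\overline{K_n}$ is the edgeless graph on $n$ vertices. The lexicographic product $G[H]$ has vertex set $V(G)\times V(H)$, with $(g,h)$ adjacent to $(g',h')$ iff $gg'\in E(G)$, or $g=g'$ and $hh'\in E(H)$. *)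

From mathcomp Require Import all_boot.
Set Implicit Arguments. Unset Strict Implicit. Unset Printing Implicit Defensive.

(* A finite simple graph is a symmetric irreflexive relation on a finType. *)

Definition edgeless (n : nat) : rel 'I_n := fun _ _ => false.
Arguments edgeless n _ _ : clear implicits.

Definition lexprod (T U : finType) (eG : rel T) (eH : rel U) : rel (T * U) :=
  fun x y => eG x.1 y.1 || ((x.1 == y.1) && eH x.2 y.2).

Definition weight (V : finType) (adj : rel V) (f : V -> nat) (u : V) : nat :=
  \sum_(x | adj u x) f x.

(* A labeling is encoded as g : {ffun V -> 'I_#|V|}; the actual label of v is
   (g v).+1 in {1,...,N}.  Injectivity of g makes it a bijection onto {1..N}. *)
Definition label (V : finType) (g : {ffun V -> 'I_#|V|}) (v : V) : nat :=
  (g v).+1.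

Definition is_ld_antimagic (V : finType) (adj : rel V) (g : {ffun V -> 'I_#|V|}) : bool :=
  injectiveb g &&
  [forall u, forall v, adj u v ==> (weight adj (label g) u != weight adj (label g) v)].

Definition n_weights (V : finType) (adj : rel V) (g : {ffun V -> 'I_#|V|}) : nat :=
  size (undup [seq weight adj (label g) v | v : V]).

(* chi_ld: minimum number of distinct weights over all local distance antimagic
   labelings (the default #|V| is only used if no such labeling exists). *)
Definition chi_ld (V : finType) (adj : rel V) : nat :=
  \big[minn/#|V|]_(g : {ffun V -> 'I_#|V|} | is_ld_antimagic adj g) n_weights adj g.

Definition bipartite (T : finType) (e : rel T) : Prop :=
  exists c : T -> bool, forall u v, e u v -> c u != c v.

Definition regular (T : finType) (e : rel T) (r : nat) : Prop :=
  forall v : T, #|[set u | e v u]| = r.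

From mathcomp Require Import all_boot order zify.
Set Implicit Arguments. Unset Strict Implicit. Unset Printing Implicit Defensive.

(* The two colour classes of an r-regular bipartite graph G have the same
   size k, so a vertex a of G is determined by its colour s and its position
   p < k in its class.  In G[\overline{K_n}] the neighbourhood of (a, h) is
   N(a) x I_n, so the weight of (a, h) is the sum over b in N(a) of the column
   sums sum_h f(b, h).  Label (a, h) by 1 + 2k h + layer_h(s, p), where every layer
   is a bijection from bool x [0, k) onto [0, 2k), arranged so that the column
   sums depend on s only and differ for the two colours: two consecutive
   layers s k + p and s k + (k - 1 - p) add up to 2 s k + k - 1, and for odd n
   a first block of three layers s k + p, (1 - s) k + p, 2 (k - 1 - p) + s adds
   up to 3 k - 2 + s.  Then every weight is r times the column sum of the
   colour opposite to that of a, so there are exactly two weights and they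
   differ along every edge; fewer than two is impossible on a graph with an
   edge. *)

Section ChiLd.
Variables (V : finType) (adj : rel V).

Lemma ld_antimagic_edge g u v : is_ld_antimagic adj g -> adj u v ->
  weight adj (label g) u != weight adj (label g) v.
Proof. by case/andP=> _ /forallP/(_ u)/forallP/(_ v)/implyP. Qed.

Lemma chi_ld_le_n_weights g : is_ld_antimagic adj g -> chi_ld adj <= n_weights adj g.
Proof. by move=> ag; rewrite /chi_ld -minEnat -leEnat; apply: Order.TotalTheory.bigmin_le_cond. Qed.

Lemma n_weights_ge2 g u v : is_ld_antimagic adj g -> adj u v -> 2 <= n_weights adj g.
Proof.
move=> ag /(ld_antimagic_edge ag) w_neq.
rewrite /n_weights -[2]/(size [:: weight adj (label g) u; weight adj (label g) v]).
apply: uniq_leq_size; first by rewrite /= inE w_neq.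
by move=> w; rewrite !inE mem_undup => /orP[] /eqP ->; apply: map_f; rewrite mem_enum.
Qed.

Lemma chi_ld_eq2 g u v :
  is_ld_antimagic adj g -> adj u v -> n_weights adj g <= 2 -> chi_ld adj = 2.
Proof.
move=> ag uv le2; apply/eqP; rewrite eqn_leq (leq_trans (chi_ld_le_n_weights ag)) //=.
have uv_neq : u != v by apply: contraNneq (ld_antimagic_edge ag uv) => ->.
rewrite /chi_ld -minEnat -leEnat; apply/Order.TotalTheory.bigmin_geP; split.
  by apply/card_gt1P; exists u, v.
by move=> g' ag'; apply: n_weights_ge2 ag' uv.
Qed.

End ChiLd.

Lemma weight_lexprod_edgeless (T : finType) (e : rel T) n (f : T * 'I_n -> nat) u :
  weight (lexprod e (edgeless n)) f u = \sum_(a | e u.1 a) \sum_(h < n) f (a, h).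
Proof.
rewrite /weight pair_big_dep /=; apply: eq_big => [[a h]|[a h] _] //=.
by rewrite /lexprod /edgeless andbF orbF andbT.
Qed.

Section RegularBipartite.
Variables (T : finType) (e : rel T) (c : T -> bool) (r : nat).
Hypotheses (e_sym : symmetric e) (c_proper : forall u v, e u v -> c u != c v)
  (e_reg : regular e r).

Lemma regular_bipartite_balanced : 0 < r -> #|[set x | c x]| = #|[set x | ~~ c x]|.
Proof.
(* Double count the edges between the two classes. *)
move=> r_gt0; apply/eqP; rewrite -(eqn_pmul2r r_gt0) -!sum_nat_cond_const; apply/eqP.
have deg a : \sum_(b | e a b) 1 = r by rewrite sum1dep_card e_reg.
rewrite -(eq_bigr _ (fun a _ => deg a)) -[RHS](eq_bigr _ (fun b _ => deg b)).
rewrite (exchange_big_dep (fun b => ~~ c b)) /=; last first.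
  by move=> a b ca /c_proper; rewrite ca; case: (c b).
apply: eq_bigr => b cb; apply: eq_bigl => a; rewrite e_sym.
by case eba: (e b a); rewrite ?andbF // andbT; move: (c_proper eba) cb; case: (c a); case: (c b).
Qed.

Lemma regular_bipartite_card_class b : 0 < r -> #|[set x | c x == b]| = #|T|./2.
Proof.
move=> /regular_bipartite_balanced balanced.
have -> : #|T| = #|[set x | c x]|.*2.
  rewrite -(cardsC [set x | c x]) -addnn {2}balanced addnC.
  by congr (_ + _); apply: eq_card => x; rewrite !inE.
rewrite doubleK; case: b; last rewrite balanced.
  by apply: eq_card => x; rewrite !inE eqb_id.
by apply: eq_card => x; rewrite !inE eqbF_neg.
Qed.

Section SideConstantLabeling.
Variables (n : nat) (g : {ffun T * 'I_n -> 'I_#|{: T * 'I_n}|}) (S : bool -> nat).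
Hypothesis column_sum_g : forall a, \sum_(h < n) label g (a, h) = S (c a).

Lemma weight_side_constant u :
  weight (lexprod e (edgeless n)) (label g) u = r * S (~~ c u.1).
Proof.
rewrite weight_lexprod_edgeless (eq_bigr (fun _ => S (~~ c u.1))); last first.
  by move=> a /c_proper; rewrite column_sum_g; case: (c a); case: (c u.1).
by rewrite sum_nat_cond_const e_reg mulnC.
Qed.

Lemma side_constant_ld_antimagic : 0 < r -> injective g -> S false != S true ->
  is_ld_antimagic (lexprod e (edgeless n)) g.
Proof.
move=> r_gt0 g_inj S_neq; apply/andP; split; first exact/injectiveP.
apply/forallP => u; apply/forallP => v; apply/implyP.
rewrite /lexprod /edgeless andbF orbF !weight_side_constant eqn_pmul2l //.
by move/c_proper; case: (c u.1); case: (c v.1) => //= _; rewrite eq_sym.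
Qed.

Lemma side_constant_n_weights : n_weights (lexprod e (edgeless n)) g <= 2.
Proof.
rewrite /n_weights -[2]/(size [:: r * S true; r * S false]).
apply: uniq_leq_size; first exact: undup_uniq.
move=> w; rewrite mem_undup => /mapP [v _ ->]; rewrite weight_side_constant !inE.
by case: (c v.1); rewrite eqxx ?orbT.
Qed.

End SideConstantLabeling.

End RegularBipartite.

Definition pair_layer (k h : nat) (s : bool) (p : nat) : nat :=
  s * k + (if odd h then k.-1 - p else p).

Definition triple_layer (k h : nat) (s : bool) (p : nat) : nat :=
  if h == 0 then s * k + p else if h == 1 then (~~ s) * k + p else 2 * (k.-1 - p) + s.

Definition layer (n k h : nat) (s : bool) (p : nat) : nat :=
  if h < 3 * odd n then triple_layer k h s p else pair_layer k (h - 3 * odd n) s p.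

Definition layer_total (n k : nat) (s : bool) : nat :=
  odd n * (3 * k - 2 + s) + (n - 3 * odd n)./2 * (2 * s * k + k.-1).

Section Layers.
Variables (n k : nat).

Lemma layer_lt h s p : p < k -> layer n k h s p < k.*2.
Proof. by rewrite /layer /triple_layer /pair_layer => ?; repeat case: ifP; case: s; lia. Qed.

Lemma layer_inj h s s' p p' : p < k -> p' < k ->
  layer n k h s p = layer n k h s' p' -> s = s' /\ p = p'.
Proof. by rewrite /layer /triple_layer /pair_layer => ? ?; repeat case: ifP; case: s; case: s'; lia. Qed.

Lemma pair_layer_sum s p N : p < k ->
  \sum_(0 <= h < N.*2) pair_layer k h s p = N * (2 * s * k + k.-1).
Proof.
move=> pk; elim: N => [|N IH]; first by rewrite big_geq.
rewrite doubleS !big_nat_recr //= IH /pair_layer /= odd_double /=; lia.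
Qed.

Lemma layer_sum s p : 1 < n -> 0 < k -> p < k ->
  \sum_(0 <= h < n) layer n k h s p = layer_total n k s.
Proof.
move=> n1 k0 pk; set o := 3 * odd n.
have on : o <= n by rewrite /o; case: (odd n) (odd_double_half n) => /=; lia.
have even_rest : n - o = ((n - o)./2).*2.
  by rewrite -[LHS]odd_double_half oddB // /o oddM; case: (odd n).
rewrite (big_cat_nat (n := o)) //= -{2}[o]add0n big_addn.
rewrite [X in _ + X](eq_bigr (fun h => pair_layer k h s p)); last first.
  by move=> h _; rewrite /layer -/o ltnNge leq_addl /= addnK.
rewrite even_rest pair_layer_sum // /layer_total /o /layer.
case: (odd n) => /=; last by rewrite big_geq.
by rewrite !big_nat_recr //= big_geq // /triple_layer /=; case: s; lia.
Qed.

Lemma layer_total_lt : 1 < n -> 0 < k -> layer_total n k false < layer_total n k true.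
Proof.
rewrite /layer_total => n1 k0; case: (odd n) (odd_double_half n) => /= hd; nia.
Qed.

End Layers.

Section ClassPosition.
Variables (T : finType) (c : T -> bool).

Definition class_pos (x : T) : nat := index x (enum [set y | c y == c x]).

Lemma class_pos_lt x : class_pos x < #|[set y | c y == c x]|.
Proof. by rewrite cardE index_mem mem_enum inE. Qed.

Lemma class_pos_inj x y : c x = c y -> class_pos x = class_pos y -> x = y.
Proof.
rewrite /class_pos => cxy; rewrite cxy => /(congr1 (nth x (enum [set z | c z == c y]))).
by rewrite !nth_index ?mem_enum ?inE ?cxy.
Qed.

End ClassPosition.

Section LexLabeling.
Variables (T : finType) (c : T -> bool) (k n : nat).
Hypothesis card_class : forall b, #|[set x | c x == b]| = k.

Lemma card_bipartition : #|T| = k.*2.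
Proof.
rewrite -addnn -{1}(card_class true) -(card_class false) -(cardsC [set x | c x == true]).
by congr (_ + _); apply: eq_card => x; rewrite !inE; case: (c x).
Qed.

Lemma class_pos_ltk x : class_pos c x < k.
Proof. by rewrite -(card_class (c x)) class_pos_lt. Qed.

Definition lex_label (v : T * 'I_n) : nat :=
  v.2 * k.*2 + layer n k v.2 (c v.1) (class_pos c v.1).

Lemma lex_label_lt v : lex_label v < #|{: T * 'I_n}|.
Proof.
rewrite card_prod card_ord card_bipartition /lex_label.
have := layer_lt n v.2 (c v.1) (class_pos_ltk v.1); have := ltn_ord v.2; nia.
Qed.

Lemma lex_label_inj : injective lex_label.
Proof.
move=> [x h] [y h']; rewrite /lex_label /= => eq_lab.
have k2_gt0 : 0 < k.*2 by rewrite double_gt0 (leq_ltn_trans _ (class_pos_ltk x)).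
have eq_h : h = h' :> nat.
  move/(congr1 (divn^~ k.*2)): eq_lab.
  by rewrite !divnMDl // !divn_small ?addn0 // layer_lt // class_pos_ltk.
move: eq_lab; rewrite eq_h => /addnI/(layer_inj (class_pos_ltk x) (class_pos_ltk y)) [cxy pxy].
by rewrite (class_pos_inj cxy pxy) (val_inj eq_h).
Qed.

Definition lex_labeling : {ffun T * 'I_n -> 'I_#|{: T * 'I_n}|} :=
  [ffun v => Ordinal (lex_label_lt v)].

Lemma lex_labeling_inj : injective lex_labeling.
Proof. by move=> u v; rewrite !ffunE => /(congr1 val) /lex_label_inj. Qed.

Definition column_sum (b : bool) : nat := \sum_(h < n) h * k.*2 + layer_total n k b + n.

Lemma lex_labeling_column_sum a : 1 < n -> 0 < k ->
  \sum_(h < n) label lex_labeling (a, h) = column_sum (c a).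
Proof.
move=> n_gt1 k_gt0; rewrite /label /column_sum.
under eq_bigr => h _ do rewrite ffunE /= /lex_label /= -addn1.
rewrite !big_split /= sum_nat_const card_ord muln1.
by rewrite -(big_mkord xpredT (fun h => layer n k h (c a) _)) layer_sum ?class_pos_ltk.
Qed.

Lemma column_sum_lt : 1 < n -> 0 < k -> column_sum false < column_sum true.
Proof. by move=> n_gt1 k_gt0; rewrite ltn_add2r ltn_add2l layer_total_lt. Qed.

End LexLabeling.

Theorem mainTheorem6 (T : finType) (e : rel T) (n m r : nat) :
  1 < n -> 1 < m -> 1 <= r ->
  symmetric e -> irreflexive e ->
  #|T| = m -> bipartite e -> regular e r ->
  chi_ld (lexprod e (edgeless n)) = 2.
Proof.
(* Irreflexivity is implied by the proper colouring [c]. *)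
move=> n_gt1 m_gt1 r_gt0 e_sym _ card_T [c c_proper] e_reg.
pose k := #|T|./2.
have card_class b : #|[set x | c x == b]| = k.
  exact: regular_bipartite_card_class e_sym c_proper e_reg b r_gt0.
have k_gt0 : 0 < k by move: (card_bipartition card_class); rewrite card_T; lia.
have [t0 _] : exists t0, t0 \in T by apply/card_gt0P; rewrite card_T ltnW.
have [t1] : exists t1, t1 \in [set x | e t0 x] by apply/card_gt0P; rewrite e_reg.
rewrite inE => e_t0t1; have n_gt0 : 0 < n := ltnW n_gt1.
have column_sum_g a := lex_labeling_column_sum card_class a n_gt1 k_gt0.
apply: (@chi_ld_eq2 _ _ (lex_labeling n card_class) (t0, Ordinal n_gt0) (t1, Ordinal n_gt0)).
- apply: (side_constant_ld_antimagic c_proper e_reg column_sum_g r_gt0).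
  + exact: lex_labeling_inj.
  + by rewrite neq_ltn column_sum_lt.
- by rewrite /lexprod /= e_t0t1.
- exact: side_constant_n_weights column_sum_g.
Qed.
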